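(* Let $\mathcal{C}$ be a covering of a finite set $E$ and let $K\in\mathcal{C}$ be reducible in $\mathcal{C}$. If $XH$ induced by $\mathcal{C}$ is the closure operator of a matroid on $E$, then $XH$ induced by $\mathcal{C}-\{K\}$ is also the closure operator of a matroid on $E$, and $\mathcal{I}_{XH}(\mathcal{C})=\mathcal{I}_{XH}(\mathcal{C}-\{K\})$ and $\mathcal{L}_{XH}(M(\mathcal{C}))=\mathcal{L}_{XH}(M(\mathcal{C}-\{K\}))$.
   Context: A covering of $E$ is a family of nonempty subsets of $E$ with union $E$. $K\in\mathcal{C}$ is reducible in $\mathcal{C}$ if $K$ is a union of some sets in $\mathcal{C}-\{K\}$. For a covering $\mathcal{D}$ and $x\in E$, $N_{\mathcal{D}}(x)=\bigcap\{K\in\mathcal{D}:x\in K\}$ and $XH$ induced by $\mathcal{D}$ is $XH(X)=\{x:N_{\mathcal{D}}(x)\cap X\neq\emptyset\}$. When $XH$ induced by $\mathcal{D}$ is the closure operator of a matroid (closure $cl(X)=\{a:r(X\cup\{a\})=r(X)\}$), $\mathcal{I}_{XH}(\mathcal{D})=\{I\subseteq E:x\notin XH(I-\{x\})\ \forall x\in I\}$ is its family of independent sets and $\mathcal{L}_{XH}(M(\mathcal{D}))=\{X:XH(X)=X\}$ its set of closed sets. *)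

From mathcomp Require Import all_boot.
Set Implicit Arguments. Unset Strict Implicit. Unset Printing Implicit Defensive.

Section Defs.
Variable E : finType.

Definition covering (C : {set {set E}}) : Prop :=
  (forall K, K \in C -> K != set0) /\ \bigcup_(K in C) K = [set: E].

Definition reducible (C : {set {set E}}) (K : {set E}) : Prop :=
  K \in C /\ exists D : {set {set E}}, D \subset C :\ K /\ K = \bigcup_(A in D) A.

Definition Nbh (D : {set {set E}}) (x : E) : {set E} :=
  \bigcap_(K in D | x \in K) K.

Definition XH (D : {set {set E}}) (X : {set E}) : {set E} :=
  [set x | Nbh D x :&: X != set0].

Definition is_matroid (I : {set {set E}}) : Prop :=
  [/\ set0 \in I,
      (forall A B : {set E}, B \in I -> A \subset B -> A \in I) &
      (forall A B : {set E}, A \in I -> B \in I -> #|A| < #|B| ->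
         exists2 e, e \in B :\: A & e |: A \in I)].

Definition mrank (I : {set {set E}}) (X : {set E}) : nat :=
  \max_(J in I | J \subset X) #|J|.

Definition mclosure (I : {set {set E}}) (X : {set E}) : {set E} :=
  [set a | mrank I (a |: X) == mrank I X].

Definition is_matroid_closure (f : {set E} -> {set E}) : Prop :=
  exists I : {set {set E}}, is_matroid I /\ forall X, mclosure I X = f X.

Definition I_XH (D : {set {set E}}) : {set {set E}} :=
  [set I : {set E} | [forall x in I, x \notin XH D (I :\ x)]].

Definition L_XH (D : {set {set E}}) : {set {set E}} :=
  [set X : {set E} | XH D X == X].

End Defs.

From mathcomp Require Import all_boot.
Set Implicit Arguments. Unset Strict Implicit. Unset Printing Implicit Defensive.

(* Removing a reducible set K from C changes no neighborhood N(x): if x is in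
   K = \bigcup D with D a family of members of C - {K}, then x lies in some
   B in D, and B is a subset of K, so K was redundant in the intersection
   N(x) anyway.  Hence XH, and everything defined from it, is unchanged. *)

Section ReducibleRemoval.
Variables (E : finType) (C : {set {set E}}) (K : {set E}).
Hypothesis redK : reducible C K.

Lemma Nbh_setD1_reducible x : Nbh C x = Nbh (C :\ K) x.
Proof.
case: redK => _ [D [sDCK defK]]; apply/setP=> y; rewrite /Nbh.
apply/bigcapP/bigcapP=> [yNC A | yNCK A /andP[AinC xA]].
  by rewrite in_setD1 -andbA => /and3P[_ AinC xA]; apply: yNC; rewrite AinC.
have [eqAK|neAK] := eqVneq A K; last by apply: yNCK; rewrite !inE neAK AinC.
move: xA; rewrite eqAK defK => /bigcupP[B BD xB].
have BinCK : B \in C :\ K by apply: (subsetP sDCK).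
by apply/bigcupP; exists B => //; apply: yNCK; rewrite BinCK.
Qed.

Lemma XH_setD1_reducible X : XH C X = XH (C :\ K) X.
Proof. by apply/setP=> x; rewrite !inE Nbh_setD1_reducible. Qed.

End ReducibleRemoval.

Section XHExtensionality.
Variables (E : finType) (C D : {set {set E}}).
Hypothesis eqXH : forall X, XH C X = XH D X.

Lemma eq_is_matroid_closure_XH :
  is_matroid_closure (XH C) -> is_matroid_closure (XH D).
Proof. by case=> I [matI clI]; exists I; split=> // X; rewrite clI eqXH. Qed.

Lemma eq_I_XH : I_XH C = I_XH D.
Proof. by apply/setP=> I; rewrite !inE; apply: eq_forallb=> x; rewrite eqXH. Qed.

Lemma eq_L_XH : L_XH C = L_XH D.
Proof. by apply/setP=> X; rewrite !inE eqXH. Qed.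

End XHExtensionality.

Theorem theorem17 (E : finType) (C : {set {set E}}) (K : {set E}) :
  covering C -> reducible C K -> is_matroid_closure (XH C) ->
  [/\ is_matroid_closure (XH (C :\ K)),
      I_XH C = I_XH (C :\ K) &
      L_XH C = L_XH (C :\ K)].
Proof.
move=> _ redK clC; have eqXH := XH_setD1_reducible redK.
split; [exact: eq_is_matroid_closure_XH clC | exact: eq_I_XH | exact: eq_L_XH].
Qed.
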